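(* Let $n,m$ be positive integers. The player can win the $(n,m)$-game if and only if $n=1$, or $m=1$, or $(n,m)=(p^a,p^b)$ for some prime $p$ and some positive integers $a,b$.
   Context: The $(n,m)$-game: $n$ counters sit at positions $1,\dots,n$, the vertices (in cyclic order) of a regular $n$-gon table, the labels being fixed from the player's perspective. Each counter shows an element of $\mathbb{Z}_m$, so a configuration is a vector in $\mathbb{Z}_m^n$. The initial configuration is arbitrary and unknown to the player. Each turn the (blindfolded) player chooses a move $y\in\mathbb{Z}_m^n$, which is added coordinatewise to the current configuration; then the table is rotated by an arbitrary, adversarially chosen amount $k\in\mathbb{Z}_n$ (possibly different each turn), i.e. the configuration $x$ is replaced by $x'$ with $x'_{i+k}=x_i$ (indices mod $n$). The player wins if at some moment (including initially) all counters show $0$. Since the player receives no information, a strategy is a finite sequence of moves $y_1,\dots,y_N$; it is winning if for every initial configuration and every choice of rotations the configuration equals the zero vector at some time. ''The player can win'' means a winning finite sequence exists. *)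

From mathcomp Require Import all_boot.
Set Implicit Arguments. Unset Strict Implicit. Unset Printing Implicit Defensive.

(* A configuration of the (n,m)-game: counter at position i : 'I_n shows the
   class of (x i) in Z_m (natural-number representatives, read modulo m). *)
Definition config (n : nat) := 'I_n -> nat.

Definition shift (n k : nat) (i : 'I_n) : 'I_n :=
  Ordinal (ltn_pmod (i + k) (leq_ltn_trans (leq0n i) (ltn_ord i))).

(* rotation of the table by k: the new configuration x' satisfies
   x'_{i+k} = x_i, i.e. x'_j = x_{j-k} (indices mod n). *)
Definition rotate (n k : nat) (x : config n) : config n :=
  fun j => x (shift (n - k %% n) j).

Definition step (n k : nat) (y x : config n) : config n :=
  rotate k (fun i => x i + y i).

Fixpoint trajectory (n : nat) (x : config n) (s : seq (config n))
    (ks : nat -> nat) : seq (config n) :=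
  x :: match s with
       | [::] => [::]
       | y :: s' => trajectory (step (ks 0) y x) s' (fun t => ks t.+1)
       end.

Definition is_zero (n m : nat) (x : config n) : bool :=
  [forall i, x i %% m == 0].

Definition winning (n m : nat) (s : seq (config n)) : Prop :=
  forall (x0 : config n) (ks : nat -> nat),
    has (@is_zero n m) (trajectory x0 s ks).

Definition can_win (n m : nat) : Prop := exists s : seq (config n), winning m s.

From HB Require Import structures.
From mathcomp Require Import all_boot all_algebra ring.
From Stdlib Require Import Classical.
Set Implicit Arguments. Unset Strict Implicit. Unset Printing Implicit Defensive.
Import GRing.Theory.

(* If distinct primes q | n and p | m exist, read the counters modulo p and
   sum them over each residue class of positions modulo q.  "All q class sums
   are equal" holds at 0 and is forced backwards: if, for some move y, every
   configuration sent to w by y and some rotation satisfies it, then so does w,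
   as q is invertible modulo p.  A winning strategy would therefore force it on
   every configuration, yet a single nonzero counter violates it.

   Conversely let D x = x - (x turned by one place).  The kernels K_j of D^j
   form a chain of rotation-invariant subgroups, and rotations act trivially on
   each K_(j+1)/K_j, so a strategy winning from K_j lifts to K_(j+1) by trying
   every e in K_(j+1) with the moves e, the strategy for K_j, -e.  D = 0 when
   n = 1, and when n = p^a and m = p^b, D^n = (1 - T)^(p^a) = 1 - T^(p^a) = 0
   modulo p, so that D^(n b) = 0. *)

Section Shift.
Variable n : nat.
Implicit Type i : 'I_n.

Lemma shift_comp a b i : shift a (shift b i) = shift (b + a) i.
Proof. by apply: val_inj; rewrite /= modnDml addnA. Qed.

Lemma shift0 i : shift 0 i = i.
Proof. by apply: val_inj; rewrite /= addn0 modn_small. Qed.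

Lemma shiftMn c i : shift (n * c) i = i.
Proof. by apply: val_inj; rewrite /= addnC mulnC modnMDl modn_small. Qed.

Lemma shiftnn i : shift n i = i.
Proof. by have := shiftMn 1 i; rewrite muln1. Qed.

Lemma shift_rotateK k i : shift k (shift (n - k %% n) i) = i.
Proof.
have n_gt0 : 0 < n by apply: leq_ltn_trans (ltn_ord i).
rewrite shift_comp.
suff -> : n - k %% n + k = n * (k %/ n).+1 by rewrite shiftMn.
rewrite {2}(divn_eq k n) addnCA subnK; last by rewrite ltnW ?ltn_mod.
by rewrite mulnSr mulnC.
Qed.

Lemma shift_inj k : injective (@shift n k).
Proof.
apply: (can_inj (g := shift (n - k %% n))) => i.
by rewrite shift_comp addnC -shift_comp shift_rotateK.
Qed.

End Shift.

Local Open Scope ring_scope.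

Section Rotation.
Variables (V : zmodType) (n : nat).
Local Notation cfg := {ffun 'I_n -> V}.

(* [frot a x i = x (i + a)]: this turns the table back by [a], so that turning
   it by [k] as in [rotate] is [frot (n - k %% n)]. *)
Definition frot (a : nat) (x : cfg) : cfg := [ffun i => x (shift a i)].

Lemma frot_is_zmod_morphism a : zmod_morphism (frot a).
Proof. by move=> x y; apply/ffunP => i; rewrite !ffunE. Qed.

HB.instance Definition _ a :=
  GRing.isZmodMorphism.Build cfg cfg (frot a) (frot_is_zmod_morphism a).

Lemma frot_comp a b x : frot a (frot b x) = frot (a + b) x.
Proof. by apply/ffunP => i; rewrite !ffunE shift_comp. Qed.

Lemma frotC a b x : frot a (frot b x) = frot b (frot a x).
Proof. by rewrite !frot_comp addnC. Qed.

Lemma frot0 x : frot 0 x = x.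
Proof. by apply/ffunP => i; rewrite ffunE shift0. Qed.

Lemma frot_nn x : frot n x = x.
Proof. by apply/ffunP => i; rewrite ffunE shiftnn. Qed.

Definition fstep (k : nat) (y x : cfg) : cfg := frot (n - k %% n) (x + y).

Lemma fstep_rotK k y w : fstep k y (frot k w - y) = w.
Proof. by apply/ffunP => i; rewrite /fstep subrK !ffunE shift_rotateK. Qed.

Fixpoint ftraj (x : cfg) (s : seq cfg) (ks : nat -> nat) : seq cfg :=
  x :: if s is y :: s' then ftraj (fstep (ks 0%N) y x) s' (fun t => ks t.+1)
       else [::].

Fixpoint ffinal (x : cfg) (s : seq cfg) (ks : nat -> nat) : cfg :=
  if s is y :: s' then ffinal (fstep (ks 0%N) y x) s' (fun t => ks t.+1) else x.

Definition reaches (P : pred cfg) (s : seq cfg) :=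
  forall x ks, has P (ftraj x s ks).

Lemma has_ftraj_head (P : pred cfg) x s ks : P x -> has P (ftraj x s ks).
Proof. by case: s => [|y s] /= ->. Qed.

Lemma has_ftraj_catl (P : pred cfg) x s1 s2 ks :
  has P (ftraj x s1 ks) -> has P (ftraj x (s1 ++ s2) ks).
Proof.
elim: s1 x ks => [|y s1 IH] x ks /=; first by rewrite orbF => /has_ftraj_head->.
by case/orP => [->|/IH->]; rewrite ?orbT.
Qed.

Lemma has_ftraj_catr (P : pred cfg) x s1 s2 ks :
  (forall ks', has P (ftraj (ffinal x s1 ks) s2 ks')) ->
  has P (ftraj x (s1 ++ s2) ks).
Proof. by elim: s1 x ks => [|y s1 IH] x ks /= h; [apply: h | rewrite IH ?orbT]. Qed.

End Rotation.

Section Transfer.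
Variables (m n : nat).

Definition zconfig (x : config n) : {ffun 'I_n -> 'Z_m} := [ffun i => (x i)%:R].
Definition nconfig (z : {ffun 'I_n -> 'Z_m}) : config n := fun i => val (z i).

Lemma nconfigK : cancel nconfig zconfig.
Proof. by move=> z; apply/ffunP => i; rewrite ffunE natr_Zp. Qed.

Lemma zconfig_trajectory x s ks :
  map zconfig (trajectory x s ks) = ftraj (zconfig x) (map zconfig s) ks.
Proof.
elim: s x ks => [|y s IH] x ks //=; congr (_ :: _); rewrite IH; congr ftraj.
by apply/ffunP => j; rewrite !ffunE natrD.
Qed.

Hypothesis m_gt1 : (1 < m)%N.

Lemma is_zero_zconfig x : is_zero m x = (zconfig x == 0).
Proof.
apply/forallP/eqP => [x0|/ffunP x0 i].
  by apply/ffunP => i; apply: val_inj; rewrite !ffunE /= (val_Zp_nat m_gt1) (eqP (x0 i)).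
by move: (congr1 val (x0 i)); rewrite !ffunE /= (val_Zp_nat m_gt1) => ->.
Qed.

Lemma can_winE :
  can_win n m <-> exists s : seq {ffun 'I_n -> 'Z_m}, reaches (pred1 0) s.
Proof.
split=> [[s win] | [s win]].
  exists (map zconfig s) => z ks; rewrite -(nconfigK z) -zconfig_trajectory has_map.
  by apply: sub_has (win _ ks) => x; rewrite /= is_zero_zconfig.
exists (map nconfig s) => x ks; move: (win (zconfig x) ks).
rewrite -{1}[s](mapK nconfigK) -zconfig_trajectory has_map.
by apply: sub_has => y; rewrite /= is_zero_zconfig.
Qed.

End Transfer.

Lemma can_win_dvd n m p : (p %| m)%N -> can_win n m -> can_win n p.
Proof.
move=> pm [s win]; exists s => x ks; apply: sub_has (win x ks) => y /forallP y0.
by apply/forallP => i; rewrite -(modn_dvdm _ pm) (eqP (y0 i)) mod0n.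
Qed.

Section Obstruction.
Variables (V : zmodType) (n : nat).
Local Notation cfg := {ffun 'I_n -> V}.

Definition backward_closed (P : pred cfg) :=
  forall w y, (forall a, P (frot a w - y)) -> P w.

(* If [w] fails [P], the adversary starts from some [frot a w - y] failing [P],
   which the first move [y] and a rotation bring to [w]. *)
Lemma reaches_backward_closed (P : pred cfg) s :
  backward_closed P -> reaches P s -> forall x, P x.
Proof.
move=> closedP; elim: s => [|y s IH] win.
  by move=> x; move: (win x (fun=> 0%N)); rewrite /= orbF.
apply: IH => w ks; case: (classic (exists a, ~~ P (frot a w - y))) => [[a Pa]|].
  move: (win (frot a w - y) (fun t => if t is t'.+1 then ks t' else a)).
  by rewrite /= (negbTE Pa) fstep_rotK.
move=> allP; apply: has_ftraj_head; apply: (closedP _ y) => a.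
by apply: contraT => Pa; exfalso; apply: allP; exists a.
Qed.

Definition csum (q : nat) (x : cfg) (j : nat) : V :=
  \sum_(i < n | i == j %[mod q]) x i.

Definition balanced (q : nat) : pred cfg :=
  fun x => [forall j : 'I_q, csum q x j == csum q x 0].

Variable q : nat.

Lemma csum_mod x j : csum q x (j %% q) = csum q x j.
Proof. by apply: eq_bigl => i; rewrite modn_mod. Qed.

Lemma csumB x y j : csum q (x - y) j = csum q x j - csum q y j.
Proof. by rewrite -sumrB; apply: eq_bigr => i _; rewrite !ffunE. Qed.

Lemma csum_frot x a j : (q %| n)%N -> csum q (frot a x) j = csum q x (j + a)%N.
Proof.
move=> qn; rewrite /csum [RHS](reindex_inj (@shift_inj n a)) /=.
by apply: eq_big => [i|i _]; rewrite ?ffunE //= (modn_dvdm _ qn) eqn_modDr.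
Qed.

Lemma balancedP x : (0 < q)%N ->
  reflect (forall j, csum q x j = csum q x 0) (balanced q x).
Proof.
move=> q_gt0; apply: (iffP forallP) => [bal j | bal j]; last exact/eqP.
by rewrite -csum_mod; apply/eqP/(bal (Ordinal (ltn_pmod j q_gt0))).
Qed.

Lemma balanced0 : balanced q 0.
Proof. by apply/forallP => j; rewrite /csum !big1 // => i _; rewrite ffunE. Qed.

(* The hypothesis at rotations 0 and 1 shows that consecutive class sums of [w]
   differ by a constant [d]; going once around the [q] classes gives
   [d *+ q = 0]. *)
Lemma balanced_backward_closed : (0 < q)%N -> (q %| n)%N ->
  (forall z : V, z *+ q = 0 -> z = 0) -> backward_closed (balanced q).
Proof.
move=> q_gt0 qn q_inj w y bal; set S := csum q w; set Y := csum q y.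
have balS a j : S (j + a)%N - Y j = S a - Y 0%N.
  by move/balancedP: (bal a) => /(_ q_gt0 j); rewrite !csumB !csum_frot.
have stepS j : S j.+1 = S j + (S 1%N - S 0%N).
  have subrBr (u v z : V) : (u - z) - (v - z) = u - v by rewrite opprB addrA subrK.
  have := balS 1%N j; have := balS 0%N j; rewrite addn0 addn1 => e0 e1.
  by rewrite -[S j.+1](subrKC (S j)) -(subrBr _ _ (Y j)) e1 e0 subrBr.
have {}stepS j : S j = S 0%N + (S 1%N - S 0%N) *+ j.
  elim: j => [|j IH]; first by rewrite mulr0n addr0.
  by rewrite stepS IH mulrSr [RHS]addrA.
have /q_inj d0 : (S 1%N - S 0%N) *+ q = 0.
  by apply: (addrI (S 0%N)); rewrite -stepS addr0 /S -csum_mod modnn.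
by apply/balancedP => // j; rewrite -/S stepS d0 mul0rn addr0.
Qed.

Lemma balanced_delta (r : V) : (0 < n)%N -> (1 < q)%N -> r != 0 ->
  ~~ balanced q [ffun i : 'I_n => if i == 0%N :> nat then r else 0].
Proof.
move=> n_gt0 q_gt1 r0; apply/negP => /forallP /(_ (Ordinal q_gt1)) /eqP /=.
rewrite /csum big1 => [|i i1]; last first.
  by rewrite ffunE; case: ifP => // /eqP i0; move: i1; rewrite i0 mod0n modn_small.
rewrite (bigD1 (Ordinal n_gt0)) //= big1 => [|i /andP[_ i0]]; last first.
  by rewrite ffunE; case: eqP => // i0'; case/eqP: i0; apply: val_inj.
by rewrite ffunE /= addr0 => /esym/eqP; rewrite (negbTE r0).
Qed.

End Obstruction.

Lemma Zp_mulrn_eq0 p q (z : 'Z_p) : (1 < p)%N -> coprime p q -> z *+ q = 0 -> z = 0.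
Proof.
move=> p_gt1 pq; have qU : (q%:R : 'Z_p) \is a GRing.unit by rewrite unitZpE // coprime_sym.
by rewrite -mulr_natr => /(congr1 ( *%R^~ (q%:R)^-1)); rewrite mulrK // mul0r.
Qed.

Section Lifting.
Variables (V : zmodType) (n : nat) (G H : zmodClosed {ffun 'I_n -> V}).
Local Notation cfg := {ffun 'I_n -> V}.
Hypothesis subGH : {subset G <= H}.
Hypothesis frot_H : forall a x, x \in H -> frot a x - x \in G.

Definition wins_on (X : {pred cfg}) (s : seq cfg) :=
  forall x ks, x \in X -> has (pred1 0) (ftraj x s ks).

Lemma fstep_class k y x z : x + y \in H -> x + y + z \in G -> fstep k y x + z \in G.
Proof. by move=> Hxy Gxyz; rewrite -(subrKA (x + y)) rpredD ?frot_H. Qed.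

Lemma fstep_H k y x : x + y \in H -> fstep k y x \in H.
Proof.
move=> Hxy; rewrite -(subrK (x + y) (fstep k y x)).
by apply: rpredD => //; apply/subGH/frot_H.
Qed.

Lemma ffinal_class z s x ks : all (mem G) s -> x \in H -> x + z \in G ->
  (ffinal x s ks \in H) && (ffinal x s ks + z \in G).
Proof.
elim: s x ks => [|y s IH] x ks /=; first by move=> _ -> ->.
case/andP=> Gy Gs Hx Gxz; have Hxy : x + y \in H by rewrite rpredD // subGH.
by apply: IH; rewrite ?fstep_H ?fstep_class // addrAC rpredD.
Qed.

Fixpoint try_classes (s E : seq cfg) : seq cfg :=
  if E is e :: E' then e :: s ++ - e :: try_classes s E' else [::].

Lemma try_classes_sub s E : all (mem H) s -> all (mem H) E -> all (mem H) (try_classes s E).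
Proof.
move=> Hs; elim: E => [|e E IH] //= /andP[He HE].
by rewrite He all_cat Hs /= rpredN He IH.
Qed.

(* Block [e; s; -e] first moves the class of the configuration by [e], so that [s]
   wins if this reaches [G]; otherwise it moves back to the original class. *)
Lemma try_classes_wins s E x ks : all (mem G) s -> wins_on G s -> all (mem H) E ->
  x \in H -> (exists2 e, e \in E & x + e \in G) ->
  has (pred1 0) (ftraj x (try_classes s E) ks).
Proof.
move=> Gs winG; elim: E x ks => [|e E IH] x ks /=; first by move=> _ _ [].
case/andP=> He HE Hx [e0 e0E Gxe0]; apply/orP; right.
have Hxe : x + e \in H by rewrite rpredD.
set w1 := fstep _ e x.
have /andP[Hw1 Gw1] : (w1 \in H) && (w1 + (e0 - e) \in G).
  by rewrite /w1 fstep_H // fstep_class // addrA addrAC addrK.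
have [e0e | e0Ne] := eqVneq e0 e.
  by apply: has_ftraj_catl; apply: winG; move: Gw1; rewrite e0e subrr addr0.
apply: has_ftraj_catr => ks2 /=; apply/orP; right.
case/andP: (ffinal_class (fun t => ks t.+1) Gs Hw1 Gw1) => Hw2 Gw2.
have Hw2e : ffinal w1 s (fun t => ks t.+1) - e \in H by rewrite rpredD ?rpredN.
apply: IH => //; first exact: fstep_H.
exists e0; first by move: e0E; rewrite inE (negbTE e0Ne).
by rewrite fstep_class // addrAC -addrA.
Qed.

End Lifting.

Section Difference.
Variables (V : zmodType) (n : nat).
Local Notation cfg := {ffun 'I_n -> V}.

Definition fdiff (x : cfg) : cfg := x - frot 1 x.

Lemma fdiff_is_zmod_morphism : zmod_morphism fdiff.
Proof. by move=> x y; rewrite /fdiff raddfB !opprB addrACA [RHS]addrACA [- y + _]addrC. Qed.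

HB.instance Definition _ :=
  GRing.isZmodMorphism.Build cfg cfg fdiff fdiff_is_zmod_morphism.

Lemma fdiffE x i : fdiff x i = x i - x (shift 1 i).
Proof. by rewrite !ffunE. Qed.

Lemma iter_fdiff_frot j a x : iter j fdiff (frot a x) = frot a (iter j fdiff x).
Proof. by elim: j => //= j ->; rewrite /fdiff raddfB frotC. Qed.

Lemma iter_fdiffB j x y : iter j fdiff (x - y) = iter j fdiff x - iter j fdiff y.
Proof. by elim: j => //= j ->; rewrite raddfB. Qed.

Lemma iter_fdiffMn j x c : iter j fdiff (x *+ c) = iter j fdiff x *+ c.
Proof. by elim: j => //= j ->; rewrite raddfMn. Qed.

Definition ker_fdiff (j : nat) : {pred cfg} := fun x => iter j fdiff x == 0.

Lemma ker_fdiff_zmod_closed j : zmod_closed (ker_fdiff j).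
Proof.
split=> [|x y]; rewrite !unfold_in /ker_fdiff.
  by elim: j => //= j /eqP->; rewrite raddf0.
by rewrite iter_fdiffB => /eqP-> /eqP->; rewrite subrr.
Qed.

HB.instance Definition _ j :=
  GRing.isZmodClosed.Build cfg (ker_fdiff j) (ker_fdiff_zmod_closed j).

Lemma ker_fdiffS j x : x \in ker_fdiff j -> x \in ker_fdiff j.+1.
Proof. by rewrite !unfold_in /ker_fdiff /= => /eqP ->; rewrite raddf0. Qed.

(* [frot 1 y - y = - fdiff y], and [fdiff] maps [ker_fdiff j.+1] into
   [ker_fdiff j]. *)
Lemma frot_ker_fdiff j a x : x \in ker_fdiff j.+1 -> frot a x - x \in ker_fdiff j.
Proof.
move=> /eqP Kx; elim: a => [|a IH]; first by rewrite frot0 subrr rpred0.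
rewrite -add1n -frot_comp -(subrKA (frot a x)) rpredD // -opprB rpredN.
by rewrite unfold_in /ker_fdiff -iterSr iter_fdiff_frot Kx raddf0.
Qed.

End Difference.

Arguments fdiff {V n} x.

Lemma ker_fdiff_strategy (V : finZmodType) n j : exists s : seq {ffun 'I_n -> V},
  all (mem (ker_fdiff j)) s /\ wins_on (ker_fdiff j) s.
Proof.
elim: j => [|j [s [Ks winK]]].
  by exists [::]; split=> // x ks /eqP /= ->; rewrite eqxx.
exists (try_classes s (enum (ker_fdiff j.+1))).
have HE : all (mem (@ker_fdiff V n j.+1)) (enum (@ker_fdiff V n j.+1)).
  by apply/allP => y; rewrite mem_enum.
split=> [|x ks Kx].
  by apply: try_classes_sub HE; apply/allP => y /(allP Ks)/ker_fdiffS.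
have Kx' : - x \in enum (ker_fdiff j.+1) by rewrite mem_enum rpredN.
apply: (try_classes_wins (@ker_fdiffS V n j) (@frot_ker_fdiff V n j)) Ks winK HE Kx _.
by exists (- x); rewrite // subrr rpred0.
Qed.

Section Nilpotent.
Variables (R : comPzRingType) (n : nat).
Local Notation cfg := {ffun 'I_n -> R}.

Lemma binomial_fwd_diff (g : nat -> R) j :
  \sum_(l < j.+1) (-1) ^+ l * 'C(j, l)%:R * g l
    - \sum_(l < j.+1) (-1) ^+ l * 'C(j, l)%:R * g l.+1
  = \sum_(l < j.+2) (-1) ^+ l * 'C(j.+1, l)%:R * g l.
Proof.
have eB : \sum_(l < j.+1) (-1) ^+ l.+1 * 'C(j, l)%:R * g l.+1
        = - \sum_(l < j.+1) (-1) ^+ l * 'C(j, l)%:R * g l.+1.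
  by rewrite -sumrN; apply: eq_bigr => l _; rewrite exprS; ring.
have eA : \sum_(l < j.+1) (-1) ^+ l.+1 * 'C(j, l.+1)%:R * g l.+1
        = \sum_(l < j) (-1) ^+ l.+1 * 'C(j, l.+1)%:R * g l.+1.
  by rewrite big_ord_recr /= bin_small // mulr0 mul0r addr0.
rewrite big_ord_recl [RHS]big_ord_recl.
under [in RHS]eq_bigr do rewrite /bump /= binS natrD mulrDr mulrDl.
by rewrite big_split /= eB eA !expr0 !bin0; ring.
Qed.

Lemma iter_fdiffE j (x : cfg) i :
  iter j fdiff x i = \sum_(l < j.+1) (-1) ^+ l * 'C(j, l)%:R * x (shift l i).
Proof.
elim: j i => [|j IH] i; first by rewrite big_ord1 expr0 bin0 !mul1r shift0.
rewrite iterS fdiffE !IH -(binomial_fwd_diff (fun l => x (shift l i))); congr (_ - _).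
by apply: eq_bigr => l _; rewrite shift_comp add1n.
Qed.

Lemma prime_dvd_bin_prime_power p a l :
  (0 < l < p ^ a)%N -> prime p -> (p %| 'C(p ^ a, l))%N.
Proof.
case: l => // l /andP[_ l_lt] p_pr; apply: contraT => pNbin.
have : (p ^ a %| l.+1 * 'C(p ^ a, l.+1))%N by rewrite -mul_bin_diag dvdn_mulr.
rewrite Gauss_dvdl ?coprimeXl ?prime_coprime // => /(dvdn_leq (ltn0Sn l)).
by rewrite leqNgt l_lt.
Qed.

(* The middle binomial coefficients vanish modulo [p]; the end terms [x i] and
   [(-1)^n x i] cancel unless [p = 2]. *)
Lemma iter_fdiff_prime_power p a (x : cfg) : prime p -> n = (p ^ a)%N ->
  exists w : cfg, iter n fdiff x = w *+ p.
Proof.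
move=> p_pr n_pa; have n_gt0 : (0 < n)%N by rewrite n_pa expn_gt0 prime_gt0.
suff /fin_all_exists[u Du] i : exists u, iter n fdiff x i = u *+ p.
  by exists [ffun i => u i]; apply/ffunP => i; rewrite ffunMnE ffunE Du.
pose F l := (-1) ^+ l * 'C(n, l)%:R * x (shift l i).
rewrite iter_fdiffE -(big_mkord xpredT F) big_ltn // big_nat_recr //= /F.
rewrite bin0 binn expr0 !mulr1 mul1r shift0 shiftnn.
pose M := \sum_(1 <= l < n) (-1) ^+ l * ('C(n, l) %/ p)%:R * x (shift l i).
have -> : \sum_(1 <= l < n) F l = M *+ p.
  rewrite /M -sumrMnl; apply: eq_big_nat => l /andP[l_gt0 l_lt].
  have p_dvd : (p %| 'C(n, l))%N by rewrite n_pa prime_dvd_bin_prime_power // l_gt0 -n_pa.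
  by rewrite /F -[in LHS](divnK p_dvd) natrM; ring.
case: (boolP (odd n)) => [n_odd | n_even].
  by exists M; rewrite -signr_odd n_odd; ring.
have p2 : p = 2%N.
  by move: n_even; rewrite -dvdn2 n_pa Euclid_dvdX // dvdn_prime2 // => /andP[/eqP].
by exists (M + x i); rewrite -signr_odd (negbTE n_even) p2; ring.
Qed.

Lemma iter_fdiff_nilpotent p a b (x : cfg) : prime p -> n = (p ^ a)%N ->
  (forall z : R, z *+ p ^ b = 0) -> iter (n * b) fdiff x = 0.
Proof.
move=> p_pr n_pa pb0.
suff [w ->] : exists w : cfg, iter (n * b) fdiff x = w *+ p ^ b.
  by apply/ffunP => i; rewrite ffunMnE ffunE pb0.
elim: b {pb0} => [|b [w IH]]; first by exists x; rewrite muln0.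
have [w' Dw'] := iter_fdiff_prime_power w p_pr n_pa.
by exists w'; rewrite mulnS iterD IH iter_fdiffMn Dw' -mulrnA expnS.
Qed.

End Nilpotent.

Lemma can_win_prime_divisors n m p q : (0 < n)%N -> can_win n m ->
  prime p -> prime q -> (p %| m)%N -> (q %| n)%N -> p = q.
Proof.
move=> n_gt0 win p_pr q_pr /can_win_dvd/(_ win)/(can_winE n (prime_gt1 p_pr))[s reach0] q_n.
apply/eqP; apply: contraT => pNq.
have q_inj (z : 'Z_p) : z *+ q = 0 -> z = 0.
  by apply: Zp_mulrn_eq0 (prime_gt1 p_pr) _; rewrite prime_coprime // dvdn_prime2.
have bal : forall x : {ffun 'I_n -> 'Z_p}, balanced q x.
  apply: (@reaches_backward_closed _ _ _ s).
    exact: balanced_backward_closed (prime_gt0 q_pr) q_n q_inj.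
  by move=> x ks; apply: sub_has (reach0 x ks) => y /eqP ->; apply: balanced0.
by case/negP: (balanced_delta n_gt0 (prime_gt1 q_pr) (oner_neq0 'Z_p)).
Qed.

Lemma prime_power_of_prime_divisors p n : (1 < n)%N ->
  (forall q, prime q -> (q %| n)%N -> q = p) -> (0 < logn p n)%N /\ n = (p ^ logn p n)%N.
Proof.
move=> n_gt1 Dq; have n_gt0 := ltnW n_gt1.
have Dp : pdiv n = p := Dq _ (pdiv_prime n_gt1) (pdiv_dvd n).
split; first by rewrite logn_gt0 mem_primes -Dp pdiv_prime // n_gt0 pdiv_dvd.
by rewrite -p_part part_pnat_id //; apply/pnatP => // q q_pr /(Dq q q_pr)->; rewrite inE.
Qed.

Lemma can_win_prime_powers n m : (1 < n)%N -> (1 < m)%N -> can_win n m ->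
  exists p a b : nat, [/\ prime p, 0 < a, 0 < b, n = p ^ a & m = p ^ b]%N.
Proof.
move=> n_gt1 m_gt1 win; have n_gt0 := ltnW n_gt1.
pose p := pdiv m; have p_pr : prime p := pdiv_prime m_gt1.
have Dq q : prime q -> (q %| n)%N -> q = p.
  by move=> q_pr q_n; rewrite (can_win_prime_divisors n_gt0 win p_pr q_pr (pdiv_dvd m) q_n).
have Dr r : prime r -> (r %| m)%N -> r = p.
  move=> r_pr r_m; rewrite -(Dq _ (pdiv_prime n_gt1) (pdiv_dvd n)).
  exact: can_win_prime_divisors n_gt0 win r_pr (pdiv_prime n_gt1) r_m (pdiv_dvd n).
have [a_gt0 Dn] := prime_power_of_prime_divisors n_gt1 Dq.
have [b_gt0 Dm] := prime_power_of_prime_divisors m_gt1 Dr.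
by exists p, (logn p n), (logn p m).
Qed.

Lemma can_win_fdiff_nilpotent n m N : (1 < m)%N ->
  (forall x : {ffun 'I_n -> 'Z_m}, iter N fdiff x = 0) -> can_win n m.
Proof.
move=> m_gt1 nilD; apply/(can_winE n m_gt1).
have [s [_ win]] := ker_fdiff_strategy 'Z_m n N.
by exists s => x ks; apply: win; rewrite unfold_in /ker_fdiff nilD.
Qed.

Lemma can_win_n1 n : can_win n 1.
Proof. by exists [::] => x ks /=; rewrite orbF; apply/forallP => i; rewrite modn1. Qed.

Lemma can_win_1m m : (0 < m)%N -> can_win 1 m.
Proof.
case: m => [|[|m]] // _; first exact: can_win_n1.
apply: (@can_win_fdiff_nilpotent _ _ 1) => // x.
by rewrite /= /fdiff frot_nn subrr.
Qed.

Lemma can_win_prime_power p a b : prime p -> can_win (p ^ a) (p ^ b).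
Proof.
move=> p_pr; case: b => [|b]; first exact: can_win_n1.
have pb_gt1 : (1 < p ^ b.+1)%N by rewrite -{1}(expn0 p) ltn_exp2l ?prime_gt1.
apply: (@can_win_fdiff_nilpotent _ _ (p ^ a * b.+1)) => // x.
apply: iter_fdiff_nilpotent p_pr (erefl _) _ => z.
by rewrite -mulr_natr pchar_Zp // mulr0.
Qed.

Local Close Scope ring_scope.

Theorem theorem1p1 (n m : nat) :
  0 < n -> 0 < m ->
  (can_win n m <->
   (n = 1 \/ m = 1 \/
    exists p a b : nat, [/\ prime p, 0 < a, 0 < b, n = p ^ a & m = p ^ b])).
Proof.
move=> n_gt0 m_gt0; split=> [win | [-> | [-> | [p [a [b [p_pr _ _ -> ->]]]]]]].
- have [n_le1 | n_gt1] := leqP n 1; first by left; apply/eqP; rewrite eqn_leq n_le1.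
  have [m_le1 | m_gt1] := leqP m 1; first by right; left; apply/eqP; rewrite eqn_leq m_le1.
  by right; right; apply: can_win_prime_powers.
- exact: can_win_1m.
- exact: can_win_n1.
- exact: can_win_prime_power.
Qed.
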